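(* If $G$ is a countably infinite ME-homogeneous graph, then its complement $\overline{G}$ is MH-homogeneous.
   Context: All graphs are undirected and loopless; subgraphs are induced. A monomorphism is an injective map sending adjacent vertices to adjacent vertices. $G$ is ME-homogeneous if every monomorphism between finite induced subgraphs of $G$ is the restriction of a surjective endomorphism of $G$; $G$ is MH-homogeneous if every monomorphism between finite induced subgraphs of $G$ is the restriction of an endomorphism of $G$. *)

From Stdlib Require Import List.

Record graph (V : Type) : Type := Graph {
  adj : V -> V -> Prop;
  adj_sym : forall x y, adj x y -> adj y x;
  adj_irrefl : forall x, ~ adj x x
}.
Arguments adj {V} g x y.

Definition countably_infinite (V : Type) : Prop :=
  exists (e : nat -> V), (forall m n, e m = e n -> m = n) /\ (forall v, exists n, e n = v).

Definition finite_set {V : Type} (A : V -> Prop) : Prop :=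
  exists l : list V, forall x, A x <-> In x l.

Definition complement {V : Type} (G : graph V) : graph V.
Proof.
  refine (Graph V (fun x y => x <> y /\ ~ adj G x y) _ _).
  - intros x y [H1 H2]. split.
    + intros ->. apply H1; reflexivity.
    + intro H. apply H2. apply adj_sym. exact H.
  - intros x [H _]. apply H; reflexivity.
Defined.

Definition is_mono_between {V : Type} (G : graph V) (A B : V -> Prop) (f : V -> V) : Prop :=
  (forall x, A x -> B (f x)) /\
  (forall x y, A x -> A y -> f x = f y -> x = y) /\
  (forall x y, A x -> A y -> adj G x y -> adj G (f x) (f y)).

Definition is_endo {V : Type} (G : graph V) (g : V -> V) : Prop :=
  forall x y, adj G x y -> adj G (g x) (g y).

Definition surjective {V : Type} (g : V -> V) : Prop := forall y, exists x, g x = y.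

Definition extends_on {V : Type} (A : V -> Prop) (f g : V -> V) : Prop :=
  forall x, A x -> g x = f x.

Definition ME_homogeneous {V : Type} (G : graph V) : Prop :=
  forall (A B : V -> Prop) (f : V -> V),
    finite_set A -> finite_set B -> is_mono_between G A B f ->
    exists g, is_endo G g /\ surjective g /\ extends_on A f g.

Definition MH_homogeneous {V : Type} (G : graph V) : Prop :=
  forall (A B : V -> Prop) (f : V -> V),
    finite_set A -> finite_set B -> is_mono_between G A B f ->
    exists g, is_endo G g /\ extends_on A f g.

(* Let f : A -> B be a monomorphism of the complement between finite sets.
   Since f is injective and preserves non-adjacency, its inverse on f[A] is a
   monomorphism of G from f[A] onto A, which ME-homogeneity extends to a
   surjective endomorphism h of G.  Any right inverse s of h (h (s v) = v)
   sends distinct non-adjacent vertices to distinct non-adjacent vertices,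
   i.e. is an endomorphism of the complement; choosing s v := f v on A makes it
   extend f. *)
From Stdlib Require Import List Classical ClassicalEpsilon.

Definition image {V : Type} (f : V -> V) (A : V -> Prop) : V -> Prop :=
  fun y => exists x, A x /\ f x = y.

Lemma finite_set_image {V : Type} (f : V -> V) (A : V -> Prop) :
  finite_set A -> finite_set (image f A).
Proof.
  intros [l Hl]. exists (map f l). intros y. split.
  - intros [x [Ax <-]]. apply in_map, Hl, Ax.
  - intros Hy. apply in_map_iff in Hy. destruct Hy as [x [<- Hx]].
    exists x. split; [apply Hl, Hx | reflexivity].
Qed.

Lemma exists_inverse_on_image {V : Type} (f : V -> V) (A : V -> Prop) :
  exists finv : V -> V, forall y, image f A y -> A (finv y) /\ f (finv y) = y.
Proof.
  apply (choice (fun y x => image f A y -> A x /\ f x = y)). intros y.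
  destruct (classic (image f A y)) as [[x [Ax Exy]] | Hy].
  - exists x. intros _. split; assumption.
  - exists y. intros H. contradiction.
Qed.

Lemma complement_mono_reflects_adj {V : Type} (G : graph V) (A B : V -> Prop)
    (f : V -> V) :
  is_mono_between (complement G) A B f ->
  forall x y, A x -> A y -> adj G (f x) (f y) -> adj G x y.
Proof.
  intros [_ [Hinj Hadj]] x y Ax Ay Hfxy. apply NNPP. intros Hxy.
  assert (Hne : x <> y).
  { intros <-. exact (adj_irrefl _ G _ Hfxy). }
  exact (proj2 (Hadj x y Ax Ay (conj Hne Hxy)) Hfxy).
Qed.

Lemma inverse_of_complement_mono {V : Type} (G : graph V) (A B : V -> Prop)
    (f finv : V -> V) :
  is_mono_between (complement G) A B f ->
  (forall y, image f A y -> A (finv y) /\ f (finv y) = y) ->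
  is_mono_between G (image f A) A finv.
Proof.
  intros Hf Hfinv. split; [| split].
  - intros y Hy. apply Hfinv, Hy.
  - intros y1 y2 H1 H2 E.
    rewrite <- (proj2 (Hfinv _ H1)), <- (proj2 (Hfinv _ H2)), E. reflexivity.
  - intros y1 y2 H1 H2 Hy.
    destruct (Hfinv _ H1) as [A1 E1], (Hfinv _ H2) as [A2 E2].
    apply (complement_mono_reflects_adj G A B f Hf); [assumption | assumption |].
    rewrite E1, E2. exact Hy.
Qed.

Lemma right_inverse_of_endo_is_complement_endo {V : Type} (G : graph V)
    (h s : V -> V) :
  is_endo G h -> (forall v, h (s v) = v) -> is_endo (complement G) s.
Proof.
  intros Hh Hs v w [Hne Hvw]. split.
  - intros E. apply Hne. rewrite <- (Hs v), <- (Hs w), E. reflexivity.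
  - intros E. apply Hvw. rewrite <- (Hs v), <- (Hs w). apply Hh, E.
Qed.

Lemma exists_right_inverse_extending {V : Type} (A : V -> Prop) (f h : V -> V) :
  surjective h -> (forall x, A x -> h (f x) = x) ->
  exists s, (forall v, h (s v) = v) /\ extends_on A f s.
Proof.
  intros Hsurj Hhf.
  destruct (choice (fun v x => h x = v /\ (A v -> x = f v))) as [s Hs].
  - intros v. destruct (classic (A v)) as [Av | nAv].
    + exists (f v). split; [apply Hhf, Av | reflexivity].
    + destruct (Hsurj v) as [x Hx]. exists x. split; [exact Hx | contradiction].
  - exists s. split.
    + intros v. apply Hs.
    + intros v Av. apply Hs, Av.
Qed.

Theorem theorem7p2 (V : Type) (G : graph V) :
  countably_infinite V -> ME_homogeneous G -> MH_homogeneous (complement G).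
Proof.
  intros _ HME A B f HA _ Hf.
  destruct (exists_inverse_on_image f A) as [finv Hfinv].
  destruct (HME (image f A) A finv) as [h [Hh [Hsurj Hext]]].
  - apply finite_set_image, HA.
  - exact HA.
  - apply (inverse_of_complement_mono G A B f finv Hf Hfinv).
  - assert (Hhf : forall x, A x -> h (f x) = x).
    { intros x Ax.
      assert (Hfx : image f A (f x)) by (exists x; split; [exact Ax | reflexivity]).
      rewrite (Hext _ Hfx).
      destruct (Hfinv _ Hfx) as [Ainv Einv].
      destruct Hf as [_ [Hinj _]]. apply Hinj; assumption. }
    destruct (exists_right_inverse_extending A f h Hsurj Hhf) as [s [Hs Hsf]].
    exists s. split; [| exact Hsf].
    exact (right_inverse_of_endo_is_complement_endo G h s Hh Hs).
Qed.
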